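(* For every relation $\mathcal{R}$ on distributions, $Cv(b(\mathcal{R})) \subseteq b(Cv(\mathcal{R}))$, i.e. $Cv$ is $b$-compatible.
   Context: $Cv(\mathcal{R})$ is the convex hull of a relation $\mathcal{R}$ on distributions: the set of pairs $(\sum_{i\in I} p_i\cdot\Delta_i, \sum_{i\in I} p_i\cdot\Theta_i)$ with $\Delta_i \mathcal{R} \Theta_i$ for all $i$ and $\sum_i p_i = 1$. $b$ is the monotone function on relations whose greatest fixed point is constrained saturated bisimilarity: $(\Delta,\Theta) \in b(\mathcal{R})$ iff $\Delta$ and $\Theta$ satisfy the same barbs ($\downarrow_c^p$: total probability $p$ of configurations ready to output on free channel $c$; $\downarrow_\bot^p$: probability $p$ of deadlock $\bot$), and for every context $O[\cdot]$, whenever $O[\Delta] \rightsquigarrow_\pi \Delta'$ there is $\Theta'$ with $O[\Theta] \rightsquigarrow_\pi \Theta'$ and $\Delta'\mathcal{R}\Theta'$, and symmetrically. Here distributions are over lqCCS extended configurations $\langle\!\langle \rho, P, R \rangle\!\rangle$ (density operator, process, observer) and $\bot$; contexts $O[\cdot] = [\cdot] \parallel R'$ add an observer $R'$; $\rightsquigarrow_\pi$ is the enhanced semantics with index $\pi = \diamond$ (process moves) or $\pi \in \{\ell,r\}^*$ (observer component moves), lifted to distributions by linearity, and it is left-decomposable: if $\sum_i p_i\cdot\Delta_i \rightsquigarrow_\pi \Delta'$ then $\Delta' = \sum_i p_i\cdot\Delta_i'$ with $\Delta_i \rightsquigarrow_\pi \Delta_i'$. *)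

From HB Require Import structures.
From mathcomp Require Import all_boot all_order all_algebra.
From mathcomp Require Import boolp classical_sets functions cardinality fsbigop reals.

Set Implicit Arguments.
Unset Strict Implicit.
Unset Printing Implicit Defensive.
Import Order.TTheory GRing.Theory Num.Theory.
Local Open Scope classical_set_scope.
Local Open Scope ring_scope.

(* Extended configurations <<rho, P, R>> (density operator, process,         *)
(* observer) and the deadlock point bot.  A point of the state space is      *)
(* [Some (rho, P, R)] or [None] (= bot).                                     *)
Section Setting.
Variables (R : realType) (Dens Proc Obsv : choiceType).

Definition conf : choiceType := (Dens * Proc * Obsv)%type.
Definition xconf : choiceType := option conf.

Definition is_dist (f : xconf -> R) : Prop :=
  [/\ finite_set (f @^-1` [set~ 0]),
      (forall x, 0 <= f x) &
      \sum_(x \in [set: xconf]) f x = 1].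

Definition dist := {f : xconf -> R | is_dist f}.

Definition drel := dist -> dist -> Prop.

Definition Cv (Rel : drel) : drel := fun D T =>
  exists (n : nat) (p : 'I_n -> R) (Ds Ts : 'I_n -> dist),
    [/\ (forall i, 0 < p i),
        \sum_(i < n) p i = 1,
        (forall i, Rel (Ds i) (Ts i)),
        (forall x, proj1_sig D x = \sum_(i < n) p i * proj1_sig (Ds i) x) &
        (forall x, proj1_sig T x = \sum_(i < n) p i * proj1_sig (Ts i) x)].

Definition drel_sub (R1 R2 : drel) : Prop := forall D T, R1 D T -> R2 D T.

(* Barbs.  [ready c C] : configuration C is ready to output on the free
   channel c.  D |c^p : the total probability of configurations ready on c is
   p;  D |bot^p : the probability of bot is p. *)
Definition barb_chan (Chan : Type) (ready : Chan -> conf -> Prop)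
  (D : dist) (c : Chan) (p : R) : Prop :=
  p = \sum_(C \in [set C : conf | ready c C]) proj1_sig D (Some C).

Definition barb_bot (D : dist) (p : R) : Prop := p = proj1_sig D None.

(* Contexts O[.] = [.] || R' : they act on an extended configuration
   <<rho, P, R>> giving <<rho, P, R || R'>>, and fix bot. *)
Definition ctx_conf (par : Obsv -> Obsv -> Obsv) (R' : Obsv) (x : xconf)
  : xconf :=
  match x with
  | Some (rho, P, Q) => Some (rho, P, par Q R')
  | None => None
  end.

(* O[D] = Do : Do is the image (pushforward) of D under the context. *)
Definition ctx_app (par : Obsv -> Obsv -> Obsv) (R' : Obsv) (D Do : dist)
  : Prop :=
  forall y, proj1_sig Do y =
    \sum_(x \in [set x | ctx_conf par R' x = y]) proj1_sig D x.

End Setting.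

(* Indices of the enhanced semantics: diamond (process moves) or a path in
   {l, r}^* (observer component moves). *)
Inductive side := Sl | Sr.
Inductive idx := Diamond | Path of seq side.

Section Sem.
Variables (R : realType) (Dens Proc Obsv : choiceType) (Chan : Type).
Variables (par : Obsv -> Obsv -> Obsv) (ready : Chan -> conf Dens Proc Obsv -> Prop).
Variable (step : idx -> dist R Dens Proc Obsv -> dist R Dens Proc Obsv -> Prop).

Local Notation dist := (dist R Dens Proc Obsv).

Definition step_linear : Prop :=
  forall pi (n : nat) (p : 'I_n -> R) (Ds Ds' : 'I_n -> dist) (D D' : dist),
    (forall i, 0 < p i) -> \sum_(i < n) p i = 1 ->
    (forall i, step pi (Ds i) (Ds' i)) ->
    (forall x, proj1_sig D x = \sum_(i < n) p i * proj1_sig (Ds i) x) ->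
    (forall x, proj1_sig D' x = \sum_(i < n) p i * proj1_sig (Ds' i) x) ->
    step pi D D'.

Definition step_left_decomposable : Prop :=
  forall pi (n : nat) (p : 'I_n -> R) (Ds : 'I_n -> dist) (D D' : dist),
    (forall i, 0 < p i) -> \sum_(i < n) p i = 1 ->
    (forall x, proj1_sig D x = \sum_(i < n) p i * proj1_sig (Ds i) x) ->
    step pi D D' ->
    exists Ds' : 'I_n -> dist,
      (forall i, step pi (Ds i) (Ds' i)) /\
      (forall x, proj1_sig D' x = \sum_(i < n) p i * proj1_sig (Ds' i) x).

(* The monotone function b whose greatest fixed point is constrained
   saturated bisimilarity. *)
Definition b (Rel : drel R Dens Proc Obsv) : drel R Dens Proc Obsv :=
  fun D T =>
  [/\ (forall c p, barb_chan ready D c p <-> barb_chan ready T c p),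
      (forall p, barb_bot D p <-> barb_bot T p),
      (forall (R' : Obsv) pi (Do D' : dist),
          ctx_app par R' D Do -> step pi Do D' ->
          exists (To T' : dist), [/\ ctx_app par R' T To, step pi To T' & Rel D' T']) &
      (forall (R' : Obsv) pi (To T' : dist),
          ctx_app par R' T To -> step pi To T' ->
          exists (Do D' : dist), [/\ ctx_app par R' D Do, step pi Do D' & Rel D' T'])].

End Sem.

From HB Require Import structures.
From mathcomp Require Import all_boot all_order all_algebra.
From mathcomp Require Import finmap.
From mathcomp Require Import boolp classical_sets functions cardinality fsbigop reals.

Set Implicit Arguments.
Unset Strict Implicit.
Unset Printing Implicit Defensive.
Import Order.TTheory GRing.Theory Num.Theory.
Local Open Scope classical_set_scope.
Local Open Scope ring_scope.

(* Barbs are linear in the distribution, so equal barbs of the components give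
   equal barbs of the two mixtures.  For the transfer clauses, a context applied
   to a mixture is the mixture of the contexts applied to the components; by
   left-decomposability a move of the mixture splits into moves of the
   components, each of which is matched by the b(R) hypothesis, and by linearity
   the matching moves recombine into a move of the other mixture whose result
   is, by construction, Cv(R)-related to the original one. *)

Section MixtureSums.
Variables (R : realType) (T : choiceType) (n : nat) (g : 'I_n -> T -> R).
Hypothesis g_fin : forall i, finite_set (g i @^-1` [set~ 0]).

Let U := \bigcup_(i in [set: 'I_n]) g i @^-1` [set~ 0].

Let U_fin : finite_set U.
Proof. by apply: bigcup_finite => [|i _]; [exact: finite_finset | exact: g_fin]. Qed.

Let g_out i x : ~ U x -> g i x = 0.
Proof. by move=> Ux; apply: contra_notP Ux => gix; exists i. Qed.

Let fsbig_restrict (A : set T) (f : T -> R) : (forall x, ~ U x -> f x = 0) ->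
  \sum_(x \in A) f x = \sum_(x <- fset_set (A `&` U)) f x.
Proof.
move=> f_out; rewrite -fsbig_finite; last exact: finite_setIr.
by apply/esym/fsbig_widen => // x [Ax /not_andP[] //] /f_out.
Qed.

Lemma finite_supp_mix (p : 'I_n -> R) :
  finite_set ((fun x => \sum_(i < n) p i * g i x) @^-1` [set~ 0]).
Proof.
apply: sub_finite_set U_fin => x /= mix_x; apply: contra_notP mix_x => Ux.
by rewrite big1 // => i _; rewrite g_out ?mulr0.
Qed.

Lemma fsbig_mix (p : 'I_n -> R) (A : set T) :
  \sum_(x \in A) \sum_(i < n) p i * g i x = \sum_(i < n) p i * \sum_(x \in A) g i x.
Proof.
rewrite fsbig_restrict => [|x Ux]; last by rewrite big1 // => i _; rewrite g_out ?mulr0.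
rewrite exchange_big; apply: eq_bigr => i _.
by rewrite [in RHS]fsbig_restrict ?mulr_sumr // => x; apply: g_out.
Qed.

End MixtureSums.

Section Distributions.
Variables (R : realType) (Dens Proc Obsv : choiceType).
Local Notation dist := (dist R Dens Proc Obsv).
Local Notation xconf := (xconf Dens Proc Obsv).

Definition mixture n (p : 'I_n -> R) (Ds : 'I_n -> dist) (D : dist) : Prop :=
  forall x, proj1_sig D x = \sum_(i < n) p i * proj1_sig (Ds i) x.

Lemma dist_supp_finite (D : dist) : finite_set (proj1_sig D @^-1` [set~ 0]).
Proof. by case: D => f []. Qed.

Lemma dist_ge0 (D : dist) x : 0 <= proj1_sig D x.
Proof. by case: D => f []. Qed.

Lemma dist_sum1 (D : dist) : \sum_(x \in [set: xconf]) proj1_sig D x = 1.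
Proof. by case: D => f []. Qed.

Lemma dist_supp_Some_finite (D : dist) :
  finite_set ((fun C => proj1_sig D (Some C)) @^-1` [set~ 0]).
Proof.
apply: (@finite_preimage _ _ (proj1_sig D @^-1` [set~ 0]) Some).
  by move=> x y _ _ [].
exact: dist_supp_finite.
Qed.

Lemma mixture_exists n (p : 'I_n -> R) (Ds : 'I_n -> dist) :
  (forall i, 0 <= p i) -> \sum_(i < n) p i = 1 -> exists D, mixture p Ds D.
Proof.
move=> p_ge0 p_sum1.
pose F x := \sum_(i < n) p i * proj1_sig (Ds i) x.
have Ds_fin i := dist_supp_finite (Ds i).
have F_dist : is_dist F.
  split; first exact: finite_supp_mix.
    by move=> x; apply: sumr_ge0 => i _; rewrite mulr_ge0 ?dist_ge0.
  by rewrite fsbig_mix //; under eq_bigr do rewrite dist_sum1 mulr1.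
by exists (exist _ F F_dist).
Qed.

Lemma pushforward_exists (h : xconf -> xconf) (D : dist) : exists Dh : dist,
  forall y, proj1_sig Dh y = \sum_(x \in [set x | h x = y]) proj1_sig D x.
Proof.
pose S := fset_set (proj1_sig D @^-1` [set~ 0]).
have D_out x : x \notin S -> proj1_sig D x = 0.
  apply: contraNeq => /eqP Dx; rewrite in_fset_set ?inE //; exact: dist_supp_finite.
pose F y := \sum_(x <- S | h x == y) proj1_sig D x.
have F_out y : y \notin (h @` S)%fset -> F y = 0.
  move=> yS; rewrite /F big1_seq // => x /andP[/eqP hxy xS].
  by move: yS; rewrite -hxy in_imfset.
have F_dist : is_dist F.
  split.
  - apply: (finite_subfset (h @` S)%fset) => y /= Fy.
    by apply: contra_notT Fy; apply: F_out.
  - by move=> y; apply: sumr_ge0 => x _; apply: dist_ge0.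
  - by rewrite (fsbigTE (h @` S)%fset) // -partition_big_imfset -(dist_sum1 D) (fsbigTE S).
exists (exist _ F F_dist) => y /=.
rewrite fsbig_mkcond (fsbigTE S) => [|x /D_out]; last by rewrite /patch; case: ifP.
rewrite /F big_mkcond; apply: eq_bigr => x _; rewrite /patch.
by case: eqP => hxy; [rewrite mem_set | rewrite memNset].
Qed.

End Distributions.

Section Compatibility.
Variables (R : realType) (Dens Proc Obsv : choiceType) (Chan : Type).
Variables (par : Obsv -> Obsv -> Obsv) (ready : Chan -> conf Dens Proc Obsv -> Prop).
Variable step : idx -> dist R Dens Proc Obsv -> dist R Dens Proc Obsv -> Prop.
Local Notation dist := (dist R Dens Proc Obsv).
Local Notation drel := (drel R Dens Proc Obsv).

(* The third clause of [b Q D T] is [ctx_sim Q D T], the fourth one is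
   [ctx_sim (fun D T => Q T D) T D]. *)
Definition ctx_sim (Q : drel) (D T : dist) : Prop :=
  forall (R' : Obsv) pi (Do D' : dist), ctx_app par R' D Do -> step pi Do D' ->
    exists (To T' : dist), [/\ ctx_app par R' T To, step pi To T' & Q D' T'].

Lemma ctx_sim_sub (Q1 Q2 : drel) D T :
  drel_sub Q1 Q2 -> ctx_sim Q1 D T -> ctx_sim Q2 D T.
Proof.
move=> Q12 simDT R' pi Do D' DDo DoD'.
have [To [T' [TTo ToT' Q1D'T']]] := simDT R' pi Do D' DDo DoD'.
by exists To, T'; split => //; apply: Q12.
Qed.

Lemma Cv_converse (Q : drel) :
  drel_sub (Cv (fun D T => Q T D)) (fun D T => Cv Q T D).
Proof. by move=> D T [n [p [Ds [Ts [? ? ? ? ?]]]]]; exists n, p, Ts, Ds. Qed.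

Lemma ctx_app_mixture n (p : 'I_n -> R) (Ds Dos : 'I_n -> dist) (D Do : dist) R' :
  mixture p Ds D ->
  (forall i, ctx_app par R' (Ds i) (Dos i)) -> ctx_app par R' D Do ->
  mixture p Dos Do.
Proof.
move=> D_mix Dos_ctx Do_ctx y; rewrite Do_ctx.
under eq_fsbigr do rewrite D_mix.
rewrite fsbig_mix => [|i]; last exact: dist_supp_finite.
by apply: eq_bigr => i _; rewrite Dos_ctx.
Qed.

Variables (n : nat) (p : 'I_n -> R) (Ds Ts : 'I_n -> dist) (D T : dist).
Hypotheses (D_mix : mixture p Ds D) (T_mix : mixture p Ts T).

Lemma barb_chan_mixture c :
  (forall i q, barb_chan ready (Ds i) c q <-> barb_chan ready (Ts i) c q) ->
  forall q, barb_chan ready D c q <-> barb_chan ready T c q.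
Proof.
move=> barbs_eq q.
have mass_mix E Es : mixture p Es E ->
    \sum_(C \in [set C | ready c C]) proj1_sig E (Some C) =
    \sum_(i < n) p i * \sum_(C \in [set C | ready c C]) proj1_sig (Es i) (Some C).
  move=> E_mix; under eq_fsbigr do rewrite E_mix.
  by rewrite fsbig_mix // => i; apply: dist_supp_Some_finite.
rewrite /barb_chan (mass_mix _ _ D_mix) (mass_mix _ _ T_mix).
by under eq_bigr => i _ do rewrite [X in p i * X](proj1 (barbs_eq i _) erefl).
Qed.

Lemma barb_bot_mixture :
  (forall i q, barb_bot (Ds i) q <-> barb_bot (Ts i) q) ->
  forall q, barb_bot D q <-> barb_bot T q.
Proof.
move=> bots_eq q; rewrite /barb_bot D_mix T_mix.
by under eq_bigr => i _ do rewrite (proj1 (bots_eq i _) erefl).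
Qed.

Hypotheses (step_lin : step_linear step) (step_ldec : step_left_decomposable step).
Hypotheses (p_gt0 : forall i, 0 < p i) (p_sum1 : \sum_(i < n) p i = 1).

Lemma ctx_sim_Cv (Q : drel) :
  (forall i, ctx_sim Q (Ds i) (Ts i)) -> ctx_sim (Cv Q) D T.
Proof.
move=> simQ R' pi Do D' Do_ctx DoD'.
have /choice [Dos Dos_ctx] : forall i, exists Doi, ctx_app par R' (Ds i) Doi.
  by move=> i; apply: pushforward_exists.
have [D's [DosD's D'_mix]] :=
  step_ldec p_gt0 p_sum1 (ctx_app_mixture D_mix Dos_ctx Do_ctx) DoD'.
have /choice [Tos /choice [T's matched]] : forall i, exists Toi T'i,
    [/\ ctx_app par R' (Ts i) Toi, step pi Toi T'i & Q (D's i) T'i].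
  by move=> i; apply: simQ (Dos_ctx i) (DosD's i).
have [To To_ctx] := pushforward_exists (ctx_conf par R') T.
have [T' T'_mix] := mixture_exists T's (fun i => ltW (p_gt0 i)) p_sum1.
exists To, T'; split => //.
  have To_mix : mixture p Tos To.
    by apply: ctx_app_mixture T_mix _ To_ctx => i; case: (matched i).
  apply: (step_lin p_gt0 p_sum1 _ To_mix T'_mix) => i.
  by case: (matched i).
by exists n, p, D's, T's; split => // i; case: (matched i).
Qed.

End Compatibility.

Theorem lemmaC7 (R : realType) (Dens Proc Obsv : choiceType) (Chan : Type)
  (par : Obsv -> Obsv -> Obsv) (ready : Chan -> conf Dens Proc Obsv -> Prop)
  (step : idx -> dist R Dens Proc Obsv -> dist R Dens Proc Obsv -> Prop)
  (Hlin : step_linear step)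
  (Hldec : step_left_decomposable step)
  (Rel : drel R Dens Proc Obsv) :
  drel_sub (Cv (b par ready step Rel)) (b par ready step (Cv Rel)).
Proof.
move=> D T [n [p [Ds [Ts [p_gt0 p_sum1 bRel D_mix T_mix]]]]].
split.
- by move=> c; apply: (barb_chan_mixture D_mix T_mix) => i; case: (bRel i).
- by apply: (barb_bot_mixture D_mix T_mix) => i; case: (bRel i).
- by apply: (ctx_sim_Cv D_mix T_mix Hlin Hldec p_gt0 p_sum1) => i; case: (bRel i).
- apply: (ctx_sim_sub (@Cv_converse _ _ _ _ Rel)).
  by apply: (ctx_sim_Cv T_mix D_mix Hlin Hldec p_gt0 p_sum1) => i; case: (bRel i).
Qed.
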